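(* A $*$-category is a pre-Hilbert $*$-category if and only if (H1) there is a zero object, (H2) every pair of objects has an orthonormal biproduct, (H3) every parallel pair of morphisms has an isometric equaliser, and (H4) every isometry is a normal monomorphism.
   Context: A $*$-category is a category with a choice of $f^*\colon Y\to X$ for each $f\colon X\to Y$ such that $1^*=1$, $(gf)^*=f^*g^*$, $(f^* )^*=f$; $f$ is an isometry if $f^*f=1$. An isometric equaliser is an equaliser that is an isometry; a kernel of $f$ is an equaliser of $f$ and the zero morphism; a normal monomorphism is a kernel of some morphism. An orthonormal biproduct is a biproduct $(X,s_1,r_1,s_2,r_2)$ with $r_k=s_k^*$. A pre-Hilbert $*$-category is a $*$-category in which (R1) there is a zero object, (R2) every pair of objects has an orthonormal biproduct, (R3) every morphism has an isometric kernel, and (R4) every diagonal $\Delta\colon X\to X\oplus X$ is a normal monomorphism. *)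

Set Implicit Arguments.
Unset Strict Implicit.

Record Category := {
  Ob :> Type;
  Hom : Ob -> Ob -> Type;
  idm : forall X : Ob, Hom X X;
  comp : forall X Y Z : Ob, Hom Y Z -> Hom X Y -> Hom X Z;
  comp_assoc : forall (W X Y Z : Ob) (h : Hom Y Z) (g : Hom X Y) (f : Hom W X),
      comp h (comp g f) = comp (comp h g) f;
  comp_id_l : forall (X Y : Ob) (f : Hom X Y), comp (idm Y) f = f;
  comp_id_r : forall (X Y : Ob) (f : Hom X Y), comp f (idm X) = f
}.

Arguments Hom {c} X Y.
Arguments idm {c} X.
Arguments comp {c X Y Z} g f.

Record StarCategory := {
  cat :> Category;
  star : forall X Y : cat, Hom X Y -> Hom Y X;
  star_id : forall X : cat, star (idm X) = idm X;
  star_comp : forall (X Y Z : cat) (g : Hom Y Z) (f : Hom X Y),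
      star (comp g f) = comp (star f) (star g);
  star_invol : forall (X Y : cat) (f : Hom X Y), star (star f) = f
}.

Arguments star {s X Y} f.

Section Defs.
Variable C : StarCategory.

Definition isometry {X Y : C} (f : Hom X Y) : Prop :=
  comp (star f) f = idm X.

Definition is_zero_object (Z : C) : Prop :=
  (forall X : C, exists f : Hom X Z, forall g : Hom X Z, g = f) /\
  (forall X : C, exists f : Hom Z X, forall g : Hom Z X, g = f).

Definition is_zero_mor {X Y : C} (f : Hom X Y) : Prop :=
  exists (Z : C) (a : Hom X Z) (b : Hom Z Y), is_zero_object Z /\ f = comp b a.

Definition is_equaliser {E X Y : C} (e : Hom E X) (f g : Hom X Y) : Prop :=
  comp f e = comp g e /\
  forall (W : C) (h : Hom W X), comp f h = comp g h ->
    exists u : Hom W E, comp e u = h /\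
      forall u' : Hom W E, comp e u' = h -> u' = u.

Definition is_isometric_equaliser {E X Y : C} (e : Hom E X) (f g : Hom X Y)
  : Prop := is_equaliser e f g /\ isometry e.

Definition is_kernel {K X Y : C} (k : Hom K X) (f : Hom X Y) : Prop :=
  exists z : Hom X Y, is_zero_mor z /\ is_equaliser k f z.

Definition normal_mono {K X : C} (m : Hom K X) : Prop :=
  exists (Y : C) (f : Hom X Y), is_kernel m f.

Definition is_product {P A B : C} (p1 : Hom P A) (p2 : Hom P B) : Prop :=
  forall (W : C) (f1 : Hom W A) (f2 : Hom W B),
    exists u : Hom W P, (comp p1 u = f1 /\ comp p2 u = f2) /\
      forall u' : Hom W P, comp p1 u' = f1 -> comp p2 u' = f2 -> u' = u.

Definition is_coproduct {P A B : C} (i1 : Hom A P) (i2 : Hom B P) : Prop :=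
  forall (W : C) (f1 : Hom A W) (f2 : Hom B W),
    exists u : Hom P W, (comp u i1 = f1 /\ comp u i2 = f2) /\
      forall u' : Hom P W, comp u' i1 = f1 -> comp u' i2 = f2 -> u' = u.

Definition is_biproduct {A1 A2 X : C} (s1 : Hom A1 X) (r1 : Hom X A1)
    (s2 : Hom A2 X) (r2 : Hom X A2) : Prop :=
  is_product r1 r2 /\ is_coproduct s1 s2 /\
  comp r1 s1 = idm A1 /\ comp r2 s2 = idm A2 /\
  is_zero_mor (comp r2 s1) /\ is_zero_mor (comp r1 s2).

Definition is_orthonormal_biproduct {A1 A2 X : C} (s1 : Hom A1 X)
    (r1 : Hom X A1) (s2 : Hom A2 X) (r2 : Hom X A2) : Prop :=
  is_biproduct s1 r1 s2 r2 /\ r1 = star s1 /\ r2 = star s2.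

Definition has_zero_object : Prop := exists Z : C, is_zero_object Z.

Definition has_orthonormal_biproducts : Prop :=
  forall A1 A2 : C, exists (X : C) (s1 : Hom A1 X) (r1 : Hom X A1)
    (s2 : Hom A2 X) (r2 : Hom X A2), is_orthonormal_biproduct s1 r1 s2 r2.

Definition has_isometric_kernels : Prop :=
  forall (X Y : C) (f : Hom X Y), exists (K : C) (k : Hom K X),
    is_kernel k f /\ isometry k.

Definition diagonals_normal : Prop :=
  forall (X P : C) (s1 s2 : Hom X P),
    is_orthonormal_biproduct s1 (star s1) s2 (star s2) ->
    forall d : Hom X P, comp (star s1) d = idm X -> comp (star s2) d = idm X ->
      normal_mono d.

Definition has_isometric_equalisers : Prop :=
  forall (X Y : C) (f g : Hom X Y), exists (E : C) (e : Hom E X),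
    is_isometric_equaliser e f g.

Definition isometries_normal : Prop :=
  forall (X Y : C) (f : Hom X Y), isometry f -> normal_mono f.

Definition pre_Hilbert : Prop :=
  has_zero_object /\ has_orthonormal_biproducts /\
  has_isometric_kernels /\ diagonals_normal.

End Defs.

(* If the diagonal of Y ⊕ Y is a kernel of q, then a morphism w equalises
   f, g : X -> Y exactly when q ⟨f, g⟩ w is zero; so the isometric kernel of
   q ⟨f, g⟩ is an isometric equaliser of f and g, and it is normal by
   construction.  An isometry f is an equaliser of 1 and f f^*, and two
   equalisers of the same pair have the same universal property, so f inherits
   normality from the normal isometric equaliser of that pair.  Conversely,
   kernels are equalisers with a zero morphism, and a diagonal is an equaliser
   of the two projections, hence is normal like the isometric equaliser of
   the projections. *)

From Stdlib Require Import Setoid.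

Section StarCategoryFacts.
Variable C : StarCategory.

Lemma zero_mor_unique {X Y : C} {f g : Hom X Y} :
  is_zero_mor f -> is_zero_mor g -> f = g.
Proof.
  intros (Z & a & b & [_ HZi] & ->) (Z' & a' & b' & [HZt' _] & ->).
  destruct (HZt' X) as [t Ht].
  destruct (HZi Y) as [t' Ht'].
  destruct (HZi Z') as [i _].
  assert (Ha : a' = comp i a) by (rewrite (Ht a'), (Ht (comp i a)); reflexivity).
  assert (Hb : b = comp b' i) by (rewrite (Ht' b), (Ht' (comp b' i)); reflexivity).
  rewrite Ha, Hb, comp_assoc. reflexivity.
Qed.

Lemma zero_mor_comp_r {W X Y : C} {f : Hom X Y} (h : Hom W X) :
  is_zero_mor f -> is_zero_mor (comp f h).
Proof.
  intros (Z & a & b & HZ & ->). exists Z, (comp a h), b.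
  split; [exact HZ | symmetry; apply comp_assoc].
Qed.

Lemma zero_mor_exists :
  has_zero_object C -> forall X Y : C, exists z : Hom X Y, is_zero_mor z.
Proof.
  intros [Z [HZt HZi]] X Y.
  destruct (HZt X) as [a _], (HZi Y) as [b _].
  exists (comp b a), Z, a, b. split; [split; assumption | reflexivity].
Qed.

Lemma product_mor_ext {P A B W : C} {r1 : Hom P A} {r2 : Hom P B}
    (x y : Hom W P) :
  is_product r1 r2 -> comp r1 x = comp r1 y -> comp r2 x = comp r2 y -> x = y.
Proof.
  intros Hprod H1 H2.
  destruct (Hprod W (comp r1 x) (comp r2 x)) as [u [_ Hu]].
  rewrite (Hu x eq_refl eq_refl), (Hu y (eq_sym H1) (eq_sym H2)). reflexivity.
Qed.

Lemma equaliser_factors_iff {E P Y : C} {d : Hom E P} {a b : Hom P Y} :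
  is_equaliser d a b ->
  forall (W : C) (w : Hom W P), comp a w = comp b w <-> exists u, comp d u = w.
Proof.
  intros [Hd Huniv] W w. split.
  - intros Hw. destruct (Huniv W w Hw) as [u [Hu _]]. exists u. exact Hu.
  - intros [u <-]. rewrite !comp_assoc, Hd. reflexivity.
Qed.

Lemma equalisers_equalise_same {E P Y Y' : C} {d : Hom E P}
    {a b : Hom P Y} {c e : Hom P Y'} :
  is_equaliser d a b -> is_equaliser d c e ->
  forall (W : C) (w : Hom W P), comp a w = comp b w <-> comp c w = comp e w.
Proof.
  intros Hab Hce W w.
  rewrite (equaliser_factors_iff Hab), (equaliser_factors_iff Hce).
  reflexivity.
Qed.

Lemma is_equaliser_equiv {K X Y Y' : C} {k : Hom K X}
    {a b : Hom X Y} {c e : Hom X Y'} :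
  (forall (W : C) (w : Hom W X), comp a w = comp b w <-> comp c w = comp e w) ->
  is_equaliser k a b -> is_equaliser k c e.
Proof.
  intros Hiff [Hk Huniv]. split.
  - apply Hiff, Hk.
  - intros W w Hw. apply Huniv, Hiff, Hw.
Qed.

Lemma equaliser_transfer {E E' X Y Y' : C} {e : Hom E X} {e' : Hom E' X}
    {a b : Hom X Y} {c z : Hom X Y'} :
  is_equaliser e a b -> is_equaliser e' a b -> is_equaliser e' c z ->
  is_equaliser e c z.
Proof.
  intros He He'ab He'cz.
  exact (is_equaliser_equiv (equalisers_equalise_same He'ab He'cz) He).
Qed.

Lemma equaliser_precomp_transfer {E K X P Y Y' : C} {d : Hom E P}
    {a b : Hom P Y} {c e : Hom P Y'} {k : Hom K X} (h : Hom X P) :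
  is_equaliser d a b -> is_equaliser d c e ->
  is_equaliser k (comp a h) (comp b h) -> is_equaliser k (comp c h) (comp e h).
Proof.
  intros Hab Hce. apply is_equaliser_equiv.
  intros W w. rewrite <- !comp_assoc.
  exact (equalisers_equalise_same Hab Hce W (comp h w)).
Qed.

Lemma normal_mono_transfer {E E' X Y : C} {e : Hom E X} {e' : Hom E' X}
    {a b : Hom X Y} :
  is_equaliser e a b -> is_equaliser e' a b -> normal_mono e' -> normal_mono e.
Proof.
  intros He He' (Q & m & z & Hz & Hm).
  exists Q, m, z. split; [exact Hz | exact (equaliser_transfer He He' Hm)].
Qed.

Lemma kernel_equaliser_zero {K X Y : C} {k : Hom K X} {f z : Hom X Y} :
  is_kernel k f -> is_zero_mor z -> is_equaliser k f z.
Proof.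
  intros (z' & Hz' & Hk) Hz. rewrite (zero_mor_unique Hz Hz'). exact Hk.
Qed.

Lemma diagonal_is_equaliser {X P : C} {r1 r2 : Hom P X} {d : Hom X P} :
  is_product r1 r2 -> comp r1 d = idm X -> comp r2 d = idm X ->
  is_equaliser d r1 r2.
Proof.
  intros Hprod H1 H2. split.
  - rewrite H1, H2. reflexivity.
  - intros W h Hh. exists (comp r1 h). split.
    + apply (product_mor_ext _ _ Hprod).
      * rewrite comp_assoc, H1, comp_id_l. reflexivity.
      * rewrite comp_assoc, H2, comp_id_l. exact Hh.
    + intros u <-. rewrite comp_assoc, H1, comp_id_l. reflexivity.
Qed.

Lemma isometry_is_equaliser {X Y : C} {f : Hom X Y} :
  isometry f -> is_equaliser f (idm Y) (comp f (star f)).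
Proof.
  intros Hf. split.
  - rewrite comp_id_l, <- comp_assoc, Hf, comp_id_r. reflexivity.
  - intros W w Hw. exists (comp (star f) w). split.
    + rewrite comp_assoc, <- Hw, comp_id_l. reflexivity.
    + intros u <-. rewrite comp_assoc, Hf, comp_id_l. reflexivity.
Qed.

Lemma pre_Hilbert_normal_isometric_equalisers :
  pre_Hilbert C -> forall (X Y : C) (f g : Hom X Y),
    exists (E : C) (e : Hom E X), is_isometric_equaliser e f g /\ normal_mono e.
Proof.
  intros (_ & Hbiprod & Hker & Hdiag) X Y f g.
  destruct (Hbiprod Y Y) as (P & s1 & r1 & s2 & r2 & Hbi).
  pose proof Hbi as [[Hprod _] [-> ->]].
  destruct (Hprod Y (idm Y) (idm Y)) as [d [[Hd1 Hd2] _]].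
  destruct (Hdiag Y P s1 s2 Hbi d Hd1 Hd2) as (Q & q & z & Hz & Hdq).
  destruct (Hprod X f g) as [h [[Hh1 Hh2] _]].
  destruct (Hker X Q (comp q h)) as (K & k & Hk & Hiso).
  assert (Hkqh : is_equaliser k (comp q h) (comp z h))
    by exact (kernel_equaliser_zero Hk (zero_mor_comp_r h Hz)).
  exists K, k. split; [split; [| exact Hiso] | exists Q, (comp q h); exact Hk].
  rewrite <- Hh1, <- Hh2.
  exact (equaliser_precomp_transfer h Hdq
           (diagonal_is_equaliser Hprod Hd1 Hd2) Hkqh).
Qed.

Lemma pre_Hilbert_isometric_equalisers :
  pre_Hilbert C -> has_isometric_equalisers C.
Proof.
  intros HC X Y f g.
  destruct (pre_Hilbert_normal_isometric_equalisers HC _ _ f g) as (E & e & He & _).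
  exists E, e. exact He.
Qed.

Lemma pre_Hilbert_isometries_normal : pre_Hilbert C -> isometries_normal C.
Proof.
  intros HC X Y f Hf.
  destruct (pre_Hilbert_normal_isometric_equalisers HC _ _ (idm Y) (comp f (star f)))
    as (E & e & [He _] & Hnormal).
  exact (normal_mono_transfer (isometry_is_equaliser Hf) He Hnormal).
Qed.

Lemma isometric_equalisers_kernels :
  has_zero_object C -> has_isometric_equalisers C -> has_isometric_kernels C.
Proof.
  intros Hzero Heq X Y f.
  destruct (zero_mor_exists Hzero X Y) as [z Hz].
  destruct (Heq X Y f z) as (E & e & He & Hiso).
  exists E, e. split; [exists z; split; assumption | exact Hiso].
Qed.

Lemma isometric_equalisers_diagonals_normal :
  has_isometric_equalisers C -> isometries_normal C -> diagonals_normal C.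
Proof.
  intros Heq Hnormal X P s1 s2 [[Hprod _] _] d Hd1 Hd2.
  destruct (Heq P X (star s1) (star s2)) as (E & e & He & Hiso).
  exact (normal_mono_transfer (diagonal_is_equaliser Hprod Hd1 Hd2) He
           (Hnormal _ _ e Hiso)).
Qed.

End StarCategoryFacts.

Theorem proposition3p5 (C : StarCategory) :
  pre_Hilbert C <->
  (has_zero_object C /\ has_orthonormal_biproducts C /\
   has_isometric_equalisers C /\ isometries_normal C).
Proof.
  split.
  - intros HC. pose proof HC as (Hzero & Hbiprod & _ & _).
    repeat split; try assumption.
    + exact (pre_Hilbert_isometric_equalisers C HC).
    + exact (pre_Hilbert_isometries_normal C HC).
  - intros (Hzero & Hbiprod & Heq & Hnormal).
    repeat split; try assumption.
    + exact (isometric_equalisers_kernels C Hzero Heq).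
    + exact (isometric_equalisers_diagonals_normal C Heq Hnormal).
Qed.
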